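(* Let $\alpha>0$, $\beta,\eta,\kappa\in\mathbb{R}$, $\rho>0$, $p\geq 1$, and $0\le a<x$. Let $f,g$ be two positive functions on $[0,\infty)$ with $f,g\in X^{p}_{c}(a,x)$ (for some $c\in\mathbb{R}$), such that ${}^{\rho}\mathcal{I}^{\alpha,\beta}_{a+,\eta,\kappa}f^{p}(x)<\infty$ and ${}^{\rho}\mathcal{I}^{\alpha,\beta}_{a+,\eta,\kappa}g^{p}(x)<\infty$. If there are real numbers $m,M>0$ with $0<m\leq \frac{f(t)}{g(t)}\leq M$ for all $t\in[a,x]$, then $$\left({}^{\rho}\mathcal{I}^{\alpha,\beta}_{a+,\eta,\kappa}f^{p}(x)\right)^{2/p}+\left({}^{\rho}\mathcal{I}^{\alpha,\beta}_{a+,\eta,\kappa}g^{p}(x)\right)^{2/p}\geq c_{2}\left({}^{\rho}\mathcal{I}^{\alpha,\beta}_{a+,\eta,\kappa}f^{p}(x)\right)^{1/p}\left({}^{\rho}\mathcal{I}^{\alpha,\beta}_{a+,\eta,\kappa}g^{p}(x)\right)^{1/p},$$ where $c_{2}=\frac{(M+1)(m+1)}{M}-2$.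
   Context: For $c\in\mathbb{R}$ and $1\le p<\infty$, $X^{p}_{c}(a,b)$ denotes the space of Lebesgue measurable functions $f$ on $(a,b)$ with $\left(\int_a^b |t^{c}f(t)|^{p}\,\frac{dt}{t}\right)^{1/p}<\infty$. For $\alpha>0$, $\beta,\eta,\kappa\in\mathbb{R}$, $\rho>0$, $0\le a<x$, and a function $\varphi$, the generalized (Katugampola) fractional integral is $${}^{\rho}\mathcal{I}^{\alpha,\beta}_{a+,\eta,\kappa}\varphi(x)=\frac{\rho^{1-\beta}x^{\kappa}}{\Gamma(\alpha)}\int_{a}^{x}\frac{\tau^{\rho(\eta+1)-1}}{(x^{\rho}-\tau^{\rho})^{1-\alpha}}\varphi(\tau)\,d\tau,$$ whenever the integral exists. Notation such as ${}^{\rho}\mathcal{I}^{\alpha,\beta}_{a+,\eta,\kappa}f^{p}(x)$ means the operator applied to the function $\tau\mapsto f(\tau)^p$, evaluated at $x$. *)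

From HB Require Import structures.
From mathcomp Require Import all_boot all_order all_algebra.
From mathcomp Require Import all_classical all_reals all_analysis.
Set Implicit Arguments. Unset Strict Implicit. Unset Printing Implicit Defensive.
Import Order.TTheory GRing.Theory Num.Theory.
Local Open Scope classical_set_scope.
Local Open Scope ring_scope.

Section Defs.
Variable R : realType.
Notation mu := (@lebesgue_measure R).

Definition Gamma (s : R) : R :=
  fine (\int[mu]_(t in `]0%R, +oo[%classic) ((t `^ (s - 1)) * expR (- t))%:E)%E.

Definition Xpc (c p a b : R) (f : R -> R) : Prop :=
  measurable_fun `]a, b[ f /\
  (\int[mu]_(t in `]a, b[) ((`| t `^ c * f t | `^ p) / t)%:E < +oo)%E.

Definition katI (rho alpha beta eta kappa a : R) (phi : R -> R) (x : R)
  : \bar R :=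
  ((rho `^ (1 - beta) * x `^ kappa / Gamma alpha)%:E *
   \int[mu]_(t in `]a, x[)
      ((t `^ (rho * (eta + 1) - 1) / (x `^ rho - t `^ rho) `^ (1 - alpha))
         * phi t)%:E)%E.
End Defs.

(* Pointwise, m <= f/g <= M gives m^p g^p <= f^p <= M^p g^p.  The Katugampola
   integral I at x is a positive linear functional, so F := (I f^p)^(1/p) and
   G := (I g^p)^(1/p) satisfy m G <= F <= M G.  Finally, with
   c2 = (M + 1)(m + 1)/M - 2,
     M (F^2 + G^2 - c2 F G) = M F (F - m G) + G (M G - F) + F (M G - m G),
   and every term on the right is nonnegative. *)
From HB Require Import structures.
From mathcomp Require Import all_boot all_order all_algebra.
From mathcomp Require Import all_classical all_reals all_analysis.
From mathcomp Require Import measurable_realfun.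
From mathcomp Require Import ring lra.
Import Order.TTheory GRing.Theory Num.Theory.
Local Open Scope classical_set_scope.
Local Open Scope ring_scope.

Section real_inequalities.
Variable R : realType.

Lemma sqr_add_ge_ratio_mul (m M F G : R) :
  0 < M -> 0 <= F -> 0 <= G -> m * G <= F <= M * G ->
  ((M + 1) * (m + 1) / M - 2) * F * G <= F ^+ 2 + G ^+ 2.
Proof.
move=> M0 F0 G0 /andP[mGF FMG]; rewrite -subr_ge0.
have -> : F ^+ 2 + G ^+ 2 - ((M + 1) * (m + 1) / M - 2) * F * G =
    (M * F * (F - m * G) + G * (M * G - F) + F * (M * G - m * G)) / M.
  by field; rewrite gt_eqF.
apply: divr_ge0; last exact: ltW.
by rewrite !addr_ge0 // !mulr_ge0 ?subr_ge0 ?(ltW M0) // (le_trans mGF).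
Qed.

Lemma powR_ratio_bounds (p m M u v : R) :
  0 <= p -> 0 <= m -> 0 < v -> m <= u / v <= M ->
  m `^ p * v `^ p <= u `^ p <= M `^ p * v `^ p.
Proof.
move=> p0 m0 v0; rewrite ler_pdivlMr // ler_pdivrMr // => /andP[mvu uMv].
have u0 : 0 <= u by rewrite (le_trans _ mvu) // mulr_ge0 // ltW.
have M0 : 0 <= M by rewrite -(pmulr_lge0 _ v0) (le_trans u0).
by rewrite -!powRM ?(ltW v0) // !ge0_ler_powR // nnegrE ?mulr_ge0 // ltW.
Qed.

Lemma powR_mul_root (p k v : R) :
  0 < p -> 0 <= k -> 0 <= v -> (k `^ p * v) `^ (1 / p) = k * v `^ (1 / p).
Proof.
move=> p0 k0 v0; rewrite powRM ?powR_ge0 // -powRrM div1r mulfV ?gt_eqF //.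
by rewrite powRr1.
Qed.

Lemma powR_add_ge_ratio_mul (p m M u v : R) :
  0 < p -> 0 <= m -> 0 < M -> 0 <= v -> m `^ p * v <= u <= M `^ p * v ->
  ((M + 1) * (m + 1) / M - 2) * u `^ (1 / p) * v `^ (1 / p)
    <= u `^ (2 / p) + v `^ (2 / p).
Proof.
move=> p0 m0 M0 v0 /andP[lo hi].
have u0 : 0 <= u by rewrite (le_trans _ lo) // mulr_ge0 ?powR_ge0.
have root_sqr w : 0 <= w -> w `^ (2 / p) = (w `^ (1 / p)) ^+ 2.
  by move=> w0; rewrite -powR_mulrn ?powR_ge0 // -powRrM mulrC mul1r.
rewrite !root_sqr //; apply: sqr_add_ge_ratio_mul; rewrite ?powR_ge0 //.
rewrite -!powR_mul_root ?(ltW M0) //.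
by rewrite !ge0_ler_powR ?divr_ge0 ?(ltW p0) // nnegrE ?mulr_ge0 ?powR_ge0.
Qed.

End real_inequalities.

Section integral_lemmas.
Context d (T : measurableType d) (R : realType) (mu : {measure set T -> \bar R}).
Variables (D : set T) (mD : measurable D).

Lemma ge0_integralZl_real (k : R) (f : T -> R) :
  0 <= k -> (forall t, D t -> 0 <= f t) -> measurable_fun D f ->
  (\int[mu]_(t in D) (k * f t)%:E = k%:E * \int[mu]_(t in D) (f t)%:E)%E.
Proof.
move=> k0 f0 mf; under eq_integral do rewrite EFinM.
by rewrite ge0_integralZl_EFin //; exact/measurable_EFinP.
Qed.

Lemma ge0_le_integral_real (f g : T -> R) :
  (forall t, D t -> 0 <= f t) -> measurable_fun D f -> measurable_fun D g ->
  (forall t, D t -> f t <= g t) ->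
  (\int[mu]_(t in D) (f t)%:E <= \int[mu]_(t in D) (g t)%:E)%E.
Proof.
by move=> f0 mf mg fg; apply: ge0_le_integral => //; exact/measurable_EFinP.
Qed.

End integral_lemmas.

Lemma Gamma_ge0 (R : realType) (s : R) : 0 <= Gamma s.
Proof.
apply: fine_ge0; apply: integral_ge0 => t _.
by rewrite lee_fin mulr_ge0 ?powR_ge0 ?expR_ge0.
Qed.

Section katugampola_integral.
Variables (R : realType) (rho alpha beta eta kappa a x : R).

Let coef : R := rho `^ (1 - beta) * x `^ kappa / Gamma alpha.

Let kernel (t : R) : R :=
  t `^ (rho * (eta + 1) - 1) / (x `^ rho - t `^ rho) `^ (1 - alpha).

Let katIE (phi : R -> R) :
  katI rho alpha beta eta kappa a phi x =
  (coef%:E * \int[lebesgue_measure]_(t in `]a, x[) (kernel t * phi t)%:E)%E.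
Proof. by []. Qed.

Let coef_ge0 : 0 <= coef.
Proof. by rewrite divr_ge0 ?Gamma_ge0 ?mulr_ge0 ?powR_ge0. Qed.

Let kernel_ge0 t : 0 <= kernel t.
Proof. by rewrite divr_ge0 ?powR_ge0. Qed.

Let measurable_kernel : measurable_fun setT kernel.
Proof.
rewrite /kernel; under eq_fun do rewrite -powRN.
apply: measurable_funM; first exact: measurable_powR.
apply: (measurableT_comp (measurable_powR _)).
by apply: measurable_funB => //; exact: measurable_powR.
Qed.

Let measurable_kernelM (phi : R -> R) : measurable_fun `]a, x[ phi ->
  measurable_fun `]a, x[ (fun t => kernel t * phi t).
Proof.
move=> mphi; apply: measurable_funM => //.
exact: measurable_funS measurable_kernel.
Qed.

Lemma katI_ge0 (phi : R -> R) : (forall t, 0 <= phi t) ->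
  (0 <= katI rho alpha beta eta kappa a phi x)%E.
Proof.
move=> phi0; rewrite katIE mule_ge0 ?lee_fin //.
by apply: integral_ge0 => t _; rewrite lee_fin mulr_ge0.
Qed.

Lemma ge0_katIZ (k : R) (phi : R -> R) :
  0 <= k -> (forall t, 0 <= phi t) -> measurable_fun `]a, x[ phi ->
  katI rho alpha beta eta kappa a (fun t => k * phi t) x =
  (k%:E * katI rho alpha beta eta kappa a phi x)%E.
Proof.
move=> k0 phi0 mphi; rewrite !katIE (muleCA k%:E); congr (_ * _)%E.
rewrite -ge0_integralZl_real //.
- by apply: eq_integral => t _; rewrite mulrCA.
- by move=> t _; rewrite mulr_ge0.
- exact: measurable_kernelM.
Qed.

Lemma ge0_le_katI (phi psi : R -> R) :
  (forall t, 0 <= phi t) ->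
  measurable_fun `]a, x[ phi -> measurable_fun `]a, x[ psi ->
  (forall t, a < t < x -> phi t <= psi t) ->
  (katI rho alpha beta eta kappa a phi x <= katI rho alpha beta eta kappa a psi x)%E.
Proof.
move=> phi0 mphi mpsi le_phi_psi; rewrite !katIE lee_wpmul2l ?lee_fin //.
apply: ge0_le_integral_real => //.
- by move=> t _; rewrite mulr_ge0.
- exact: measurable_kernelM.
- exact: measurable_kernelM.
- by move=> t; rewrite /= in_itv => /le_phi_psi; exact: ler_wpM2l.
Qed.

Lemma katI_ratio_bounds (k1 k2 : R) (phi psi : R -> R) :
  0 <= k1 -> 0 <= k2 -> (forall t, 0 <= phi t) -> (forall t, 0 <= psi t) ->
  measurable_fun `]a, x[ phi -> measurable_fun `]a, x[ psi ->
  (forall t, a < t < x -> k1 * psi t <= phi t <= k2 * psi t) ->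
  (k1%:E * katI rho alpha beta eta kappa a psi x
     <= katI rho alpha beta eta kappa a phi x
     <= k2%:E * katI rho alpha beta eta kappa a psi x)%E.
Proof.
move=> k10 k20 phi0 psi0 mphi mpsi bounds.
rewrite -!ge0_katIZ //; apply/andP; split; apply: ge0_le_katI => //.
- by move=> t; rewrite mulr_ge0.
- exact: measurable_funM.
- by move=> t /bounds /andP[].
- exact: measurable_funM.
- by move=> t /bounds /andP[].
Qed.

End katugampola_integral.

Lemma fine_ratio_bounds (R : realType) (k1 k2 : R) (u v : \bar R) :
  u \is a fin_num -> v \is a fin_num ->
  (k1%:E * v <= u <= k2%:E * v)%E -> k1 * fine v <= fine u <= k2 * fine v.
Proof.
move=> uf vf /andP[lo hi].
have fineZ k : k * fine v = fine (k%:E * v) by rewrite fineM.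
by rewrite !fineZ !fine_le ?fin_numM.
Qed.

Theorem theorem9 (R : realType) (alpha beta eta kappa rho p a x c m M : R)
  (f g : R -> R) :
  (0 < alpha)%R -> (0 < rho)%R -> (1 <= p)%R -> (0 <= a)%R -> (a < x)%R ->
  (forall t, (0 <= t)%R -> (0 < f t)%R) -> (forall t, (0 <= t)%R -> (0 < g t)%R) ->
  Xpc c p a x f -> Xpc c p a x g ->
  (katI rho alpha beta eta kappa a (fun t => (f t `^ p)%R) x < +oo)%E ->
  (katI rho alpha beta eta kappa a (fun t => (g t `^ p)%R) x < +oo)%E ->
  (0 < m)%R -> (0 < M)%R ->
  (forall t, (a <= t <= x)%R -> (m <= f t / g t <= M)%R) ->
  let IF := fine (katI rho alpha beta eta kappa a (fun t => (f t `^ p)%R) x) in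
  let IG := fine (katI rho alpha beta eta kappa a (fun t => (g t `^ p)%R) x) in
  let c2 := (M + 1) * (m + 1) / M - 2 in
  (IF `^ (2 / p) + IG `^ (2 / p) >= c2 * IF `^ (1 / p) * IG `^ (1 / p))%R.
Proof.
move=> _ _ p1 a0 _ f0 g0 [mf _] [mg _] Jf_lty Jg_lty m0 M0 ratio /=.
have p0 : 0 < p by lra.
have fp_ge0 t : 0 <= f t `^ p by exact: powR_ge0.
have gp_ge0 t : 0 <= g t `^ p by exact: powR_ge0.
apply: powR_add_ge_ratio_mul; rewrite ?(ltW m0) ?fine_ge0 ?katI_ge0 //.
apply: fine_ratio_bounds; rewrite ?ge0_fin_numE ?katI_ge0 //.
apply: katI_ratio_bounds; rewrite ?powR_ge0 //.
- exact: measurableT_comp (measurable_powR p) mf.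
- exact: measurableT_comp (measurable_powR p) mg.
- move=> t /andP[lt_at lt_tx].
  by apply: powR_ratio_bounds; rewrite ?(ltW p0) ?(ltW m0) ?g0 ?ratio //; lra.
Qed.
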